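(* For every $h\in(\tfrac12,\tfrac34)$ and every integer $k\ge1$, $$\rho_h(k)\ge\frac{h(2h-1)}{2k^{2-2h}}.$$ In particular $\sum_{k=1}^\infty\rho_h^2(k)\ge\frac{h^2(2h-1)^2}{4}\zeta(4-4h)$, where $\zeta$ is the Riemann zeta function, and consequently $\lim_{h\to\frac34-}\sum_{k=1}^\infty\rho_h^2(k)=\infty$.
   Context: $\rho_h(k)=\frac12\big((k+1)^{2h}+(k-1)^{2h}-2k^{2h}\big)$. *)

From Stdlib Require Import Reals Lra.
From Coquelicot Require Import Coquelicot.
Open Scope R_scope.

(* Real power x^y for x >= 0, with the convention 0^y = 0 (y > 0).
   Stdlib's Rpower 0 y = exp (y * ln 0) = 1, hence the explicit case. *)
Definition rpow (x y : R) : R := if Rle_dec x 0 then 0 else Rpower x y.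

Definition rho (h : R) (k : nat) : R :=
  (rpow (INR k + 1) (2 * h) + rpow (INR k - 1) (2 * h) - 2 * rpow (INR k) (2 * h)) / 2.

Definition zeta (s : R) : R := Series (fun n : nat => / rpow (INR n + 1) s).

(* Applying the mean value theorem twice, the second difference
   [(k+1)^p + (k-1)^p - 2 k^p] equals [p (p-1) xi^(p-2)] for some [xi] in [(k-1, k+1)];
   for [p = 2h] in [[1, 2]] it therefore lies between [p (p-1) (k+1)^(p-2)] and
   [p (p-1) (k-1)^(p-2)].  The lower end gives the pointwise bound on [rho_h] ([k = 1] is
   checked by hand), and the two ends together make [sum rho_h(k)^2] comparable with
   [zeta(4 - 4h)].  Comparing [zeta(s)] with the integral of [x^(-s)] yields
   [zeta(s) >= 1/(2(s-1))], which blows up as [h -> 3/4]. *)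

From Stdlib Require Import Reals Lra Lia.
From Coquelicot Require Import Coquelicot.
Open Scope R_scope.

Lemma second_difference_mvt (f f1 f2 : R -> R) (x : R) :
  (forall t, x - 1 <= t <= x + 1 -> is_derive f t (f1 t)) ->
  (forall t, x - 1 < t < x + 1 -> is_derive f1 t (f2 t)) ->
  exists xi, x - 1 < xi < x + 1 /\ f (x + 1) + f (x - 1) - 2 * f x = f2 xi.
Proof.
  intros Hf Hf1.
  set (D := f (x + 1) + f (x - 1) - 2 * f x).
  (* Mean value theorem for [t |-> f (x + t) + f (x - t) - D t^2], which agrees at 0 and 1. *)
  destruct (MVT_cor2 (fun t => f (x + t) + f (x - t) - D * t ^ 2)
              (fun t => f1 (x + t) - f1 (x - t) - 2 * D * t) 0 1)
    as [tau [Etau Htau]]; [lra | |].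
  { intros t Ht. apply is_derive_Reals.
    apply (is_derive_ext (fun t => minus (plus (f (x + t)) (f (x - t))) (D * t ^ 2)));
      [reflexivity|].
    evar (l : R); replace (f1 (x + t) - f1 (x - t) - 2 * D * t) with l; unfold l.
    - apply @is_derive_minus; [apply @is_derive_plus|].
      + apply (is_derive_comp f (fun t => x + t)); [apply Hf; lra|].
        auto_derive; auto.
      + apply (is_derive_comp f (fun t => x - t)); [apply Hf; lra|].
        auto_derive; auto.
      + auto_derive; auto.
    - unfold minus, plus, opp, scal; simpl; unfold mult; simpl. ring. }
  rewrite Rplus_0_r, Rminus_0_r in Etau.
  assert (Hslope : f1 (x + tau) - f1 (x - tau) = 2 * D * tau) by (unfold D in *; lra).
  destruct (MVT_cor2 f1 f2 (x - tau) (x + tau)) as [xi [Exi Hxi]]; [lra | |].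
  { intros t Ht. apply is_derive_Reals, Hf1. lra. }
  exists xi; split; [lra|].
  rewrite Hslope in Exi. nra.
Qed.

Lemma is_derive_Rpower (p x : R) : 0 < x ->
  is_derive (fun t => Rpower t p) x (p * Rpower x (p - 1)).
Proof. intros Hx. apply is_derive_Reals, derivable_pt_lim_power, Hx. Qed.

Lemma Rpower_second_difference (p x : R) : 1 < x ->
  exists xi, x - 1 < xi < x + 1 /\
    Rpower (x + 1) p + Rpower (x - 1) p - 2 * Rpower x p = p * (p - 1) * Rpower xi (p - 2).
Proof.
  intros Hx.
  destruct (second_difference_mvt (fun t => Rpower t p) (fun t => p * Rpower t (p - 1))
              (fun t => p * ((p - 1) * Rpower t (p - 1 - 1))) x) as [xi [Hxi E]].
  - intros t Ht. apply is_derive_Rpower. lra.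
  - intros t Ht. apply @is_derive_scal, is_derive_Rpower. lra.
  - exists xi; split; [exact Hxi|]. rewrite E.
    replace (p - 1 - 1) with (p - 2) by ring. ring.
Qed.

Lemma Rpower_pos (x y : R) : 0 < Rpower x y.
Proof. apply exp_pos. Qed.

Lemma Rpower_le_of_nonpos (x y e : R) : 0 < x <= y -> e <= 0 -> Rpower y e <= Rpower x e.
Proof.
  intros Hxy He. replace e with (- - e) by ring. rewrite (Rpower_Ropp y), (Rpower_Ropp x).
  apply Rinv_le_contravar; [apply Rpower_pos|]. apply Rle_Rpower_l; lra.
Qed.

Lemma Rpower_second_difference_bounds (p x : R) : 1 <= p <= 2 -> 1 < x ->
  p * (p - 1) * Rpower (x + 1) (p - 2)
    <= Rpower (x + 1) p + Rpower (x - 1) p - 2 * Rpower x p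
    <= p * (p - 1) * Rpower (x - 1) (p - 2).
Proof.
  intros Hp Hx.
  destruct (Rpower_second_difference p x Hx) as [xi [Hxi ->]].
  assert (Hc : 0 <= p * (p - 1)) by nra.
  split; apply Rmult_le_compat_l; try exact Hc; apply Rpower_le_of_nonpos; lra.
Qed.

Lemma rpow_Rpower (x y : R) : 0 < x -> rpow x y = Rpower x y.
Proof. intros Hx. unfold rpow. destruct (Rle_dec x 0); [lra | reflexivity]. Qed.

Lemma Rpower_1_l (y : R) : Rpower 1 y = 1.
Proof. unfold Rpower. rewrite ln_1, Rmult_0_r. apply exp_0. Qed.

Lemma rho_Rpower (h : R) (k : nat) : (2 <= k)%nat ->
  rho h k = (Rpower (INR k + 1) (2 * h) + Rpower (INR k - 1) (2 * h)
             - 2 * Rpower (INR k) (2 * h)) / 2.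
Proof.
  intros Hk. assert (2 <= INR k) by (apply (le_INR 2); exact Hk).
  unfold rho. rewrite !rpow_Rpower by lra. reflexivity.
Qed.

Lemma rho_one (h : R) : rho h 1 = Rpower 2 (2 * h - 1) - 1.
Proof.
  unfold rho, rpow. simpl INR.
  replace (1 - 1) with 0 by ring. replace (1 + 1) with 2 by ring.
  destruct (Rle_dec 2 0), (Rle_dec 0 0), (Rle_dec 1 0); try lra.
  rewrite Rpower_1_l.
  replace (2 * h) with (1 + (2 * h - 1)) at 1 by ring.
  rewrite Rpower_plus, Rpower_1 by lra.
  field.
Qed.

Lemma rho_lower_bound (h : R) (k : nat) : 1/2 <= h <= 1 -> (1 <= k)%nat ->
  h * (2 * h - 1) / 2 * Rpower (INR k) (2 * h - 2) <= rho h k.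
Proof.
  intros Hh Hk. assert (Hc : 0 <= h * (2 * h - 1)) by nra.
  destruct (Nat.eq_dec k 1) as [-> | Hk1].
  - (* [2^(2h-1) >= 1 + (2h-1) ln 2] and [ln 2 > 1/2 >= h/2]. *)
    rewrite rho_one. simpl INR. rewrite Rpower_1_l.
    assert (Hexp := exp_ineq1_le ((2 * h - 1) * ln 2)).
    assert (Hln := ln_lt_2). unfold Rpower. nra.
  - assert (Hk2 : (2 <= k)%nat) by lia.
    assert (HK : 2 <= INR k) by (apply (le_INR 2); exact Hk2).
    rewrite rho_Rpower by exact Hk2.
    destruct (Rpower_second_difference_bounds (2 * h) (INR k) ltac:(lra) ltac:(lra))
      as [Hlow _].
    (* [(k+1)^(2h-2) >= (2k)^(2h-2) = 2^(2h-2) k^(2h-2) >= k^(2h-2) / 2]. *)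
    assert (Hshift : Rpower (2 * INR k) (2 * h - 2) <= Rpower (INR k + 1) (2 * h - 2))
      by (apply Rpower_le_of_nonpos; lra).
    rewrite <- Rpower_mult_distr in Hshift by lra.
    assert (Htwo : / 2 <= Rpower 2 (2 * h - 2)).
    { rewrite <- (Rpower_1 2) at 1 by lra. rewrite <- Rpower_Ropp.
      apply Rle_Rpower; lra. }
    assert (Hpos := Rpower_pos (INR k) (2 * h - 2)).
    assert (Hhalf : Rpower (INR k) (2 * h - 2) / 2 <= Rpower (INR k + 1) (2 * h - 2)) by nra.
    apply Rmult_le_compat_l with (r := h * (2 * h - 1)) in Hhalf; [|exact Hc].
    lra.
Qed.

Lemma rho_upper_bound (h : R) (k : nat) : 1/2 <= h <= 1 -> (2 <= k)%nat ->
  rho h k <= h * (2 * h - 1) * Rpower (INR k - 1) (2 * h - 2).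
Proof.
  intros Hh Hk. assert (HK : 2 <= INR k) by (apply (le_INR 2); exact Hk).
  rewrite rho_Rpower by exact Hk.
  destruct (Rpower_second_difference_bounds (2 * h) (INR k) ltac:(lra) ltac:(lra))
    as [_ Hup].
  lra.
Qed.

Definition zeta_term (s : R) (n : nat) : R := / rpow (INR n + 1) s.

Lemma zeta_term_Rpower (s : R) (n : nat) : zeta_term s n = Rpower (INR n + 1) (- s).
Proof.
  unfold zeta_term. rewrite Rpower_Ropp, rpow_Rpower; [reflexivity|].
  pose proof (pos_INR n). lra.
Qed.

Lemma zeta_term_pos (s : R) (n : nat) : 0 < zeta_term s n.
Proof. rewrite zeta_term_Rpower. apply Rpower_pos. Qed.

Lemma Rpower_integral_bounds (s x : R) : 1 < s -> 0 < x ->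
  Rpower (x + 1) (- s) <= (Rpower x (1 - s) - Rpower (x + 1) (1 - s)) / (s - 1)
    <= Rpower x (- s).
Proof.
  intros Hs Hx.
  destruct (MVT_cor2 (fun t => Rpower t (1 - s)) (fun t => (1 - s) * Rpower t (1 - s - 1))
              x (x + 1)) as [c [E Hc]]; [lra | |].
  { intros t Ht. apply derivable_pt_lim_power. lra. }
  replace (1 - s - 1) with (- s) in E by ring.
  replace (Rpower x (1 - s) - Rpower (x + 1) (1 - s)) with ((s - 1) * Rpower c (- s))
    by lra.
  replace ((s - 1) * Rpower c (- s) / (s - 1)) with (Rpower c (- s)) by (field; lra).
  split; apply Rpower_le_of_nonpos; lra.
Qed.

Lemma sum_n_telescope (u : nat -> R) (N : nat) :
  sum_n (fun n => u n - u (S n)) N = u O - u (S N).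
Proof.
  induction N as [|N IH].
  - rewrite sum_O. reflexivity.
  - rewrite sum_Sn, IH. unfold plus; simpl. ring.
Qed.

Lemma sum_n_le_Series (a : nat -> R) (N : nat) : (forall n, 0 <= a n) -> ex_series a ->
  sum_n a N <= Series a.
Proof.
  intros Ha [l Hl]. rewrite (is_series_unique a l Hl).
  apply (is_lim_seq_incr_compare (sum_n a) l Hl).
  intros n. rewrite sum_Sn. unfold plus; simpl. specialize (Ha (S n)). lra.
Qed.

Lemma ex_series_of_bounded_sum_n (a : nat -> R) (M : R) : (forall n, 0 <= a n) ->
  (forall N, sum_n a N <= M) -> ex_series a.
Proof.
  intros Ha HM.
  destruct (ex_finite_lim_seq_incr (sum_n a) M) as [l Hl]; [|exact HM|].
  - intros n. rewrite sum_Sn. unfold plus; simpl. specialize (Ha (S n)). lra.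
  - exists l. exact Hl.
Qed.

Section ZetaBounds.

Variable s : R.
Hypothesis Hs : 1 < s.

(* [tail_integral n] is the integral of [x^(-s)] from [n + 1] to infinity. *)
Let tail_integral (n : nat) : R := Rpower (INR n + 1) (1 - s) / (s - 1).

Lemma zeta_term_telescope_bounds (n : nat) :
  zeta_term s (S n) <= tail_integral n - tail_integral (S n) <= zeta_term s n.
Proof.
  unfold tail_integral. rewrite !zeta_term_Rpower, S_INR.
  pose proof (pos_INR n).
  replace (Rpower (INR n + 1) (1 - s) / (s - 1) - Rpower (INR n + 1 + 1) (1 - s) / (s - 1))
    with ((Rpower (INR n + 1) (1 - s) - Rpower (INR n + 1 + 1) (1 - s)) / (s - 1))
    by (field; lra).
  apply Rpower_integral_bounds; lra.
Qed.

Lemma ex_series_zeta_term : ex_series (zeta_term s).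
Proof.
  apply ex_series_incr_1, ex_series_of_bounded_sum_n with (tail_integral O).
  - intros n. left. apply zeta_term_pos.
  - intros N. apply Rle_trans with (sum_n (fun n => tail_integral n - tail_integral (S n)) N).
    + rewrite !sum_n_Reals. apply sum_Rle. intros n _. apply zeta_term_telescope_bounds.
    + rewrite sum_n_telescope. unfold tail_integral.
      assert (0 < Rpower (INR (S N) + 1) (1 - s) / (s - 1))
        by (apply Rdiv_lt_0_compat; [apply Rpower_pos | lra]).
      lra.
Qed.

Lemma zeta_lower_bound : / (2 * (s - 1)) <= zeta s.
Proof.
  (* Choose [N] with [(N + 2)^(s-1) >= 2]: the partial sum up to [N] already exceeds
     [(1 - 1/2) / (s - 1)]. *)
  destruct (INR_unbounded (Rpower 2 (/ (s - 1)))) as [N HN].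
  assert (Hpow : Rpower (INR (S N) + 1) (1 - s) <= / 2).
  { replace (1 - s) with (- (s - 1)) by ring. rewrite Rpower_Ropp.
    apply Rinv_le_contravar; [lra|].
    apply Rle_trans with (Rpower (Rpower 2 (/ (s - 1))) (s - 1)).
    - rewrite Rpower_mult, Rinv_l, Rpower_1; lra.
    - apply Rle_Rpower_l; [lra|]. split; [apply Rpower_pos|].
      rewrite S_INR. pose proof (pos_INR N). lra. }
  apply Rle_trans with (sum_n (fun n => tail_integral n - tail_integral (S n)) N).
  - rewrite sum_n_telescope. unfold tail_integral.
    change (INR O) with 0. rewrite Rplus_0_l, Rpower_1_l.
    assert (Hc : 0 < / (s - 1)) by (apply Rinv_0_lt_compat; lra).
    unfold Rdiv. rewrite Rinv_mult. nra.
  - apply Rle_trans with (sum_n (zeta_term s) N).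
    + rewrite !sum_n_Reals. apply sum_Rle. intros n _. apply zeta_term_telescope_bounds.
    + apply sum_n_le_Series; [intros n; left; apply zeta_term_pos | exact ex_series_zeta_term].
Qed.

End ZetaBounds.

Lemma Rpower_sq (x y : R) : Rpower x y ^ 2 = Rpower x (2 * y).
Proof. replace (2 * y) with (y + y) by ring. rewrite Rpower_plus. ring. Qed.

Lemma rho_nonneg (h : R) (k : nat) : 1/2 <= h <= 1 -> (1 <= k)%nat -> 0 <= rho h k.
Proof.
  intros Hh Hk. eapply Rle_trans; [|exact (rho_lower_bound h k Hh Hk)].
  pose proof (Rpower_pos (INR k) (2 * h - 2)).
  apply Rmult_le_pos; [|lra]. apply Rmult_le_pos; [|lra]. nra.
Qed.

Lemma rho_sq_lower_bound (h : R) (n : nat) : 1/2 <= h <= 1 ->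
  h ^ 2 * (2 * h - 1) ^ 2 / 4 * zeta_term (4 - 4 * h) n <= rho h (S n) ^ 2.
Proof.
  intros Hh. pose proof (rho_lower_bound h (S n) Hh ltac:(lia)) as Hlow.
  rewrite S_INR in Hlow.
  pose proof (Rpower_pos (INR n + 1) (2 * h - 2)).
  rewrite zeta_term_Rpower. replace (- (4 - 4 * h)) with (2 * (2 * h - 2)) by ring.
  rewrite <- Rpower_sq.
  replace (h ^ 2 * (2 * h - 1) ^ 2 / 4 * Rpower (INR n + 1) (2 * h - 2) ^ 2)
    with ((h * (2 * h - 1) / 2 * Rpower (INR n + 1) (2 * h - 2)) ^ 2) by field.
  apply pow_incr. split; [|exact Hlow].
  apply Rmult_le_pos; [|lra]. apply Rmult_le_pos; [|lra]. nra.
Qed.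

Lemma rho_sq_upper_bound (h : R) (n : nat) : 1/2 <= h <= 1 ->
  rho h (S (S n)) ^ 2 <= (h * (2 * h - 1)) ^ 2 * zeta_term (4 - 4 * h) n.
Proof.
  intros Hh. pose proof (rho_upper_bound h (S (S n)) Hh ltac:(lia)) as Hup.
  replace (INR (S (S n)) - 1) with (INR n + 1) in Hup by (rewrite !S_INR; ring).
  rewrite zeta_term_Rpower. replace (- (4 - 4 * h)) with (2 * (2 * h - 2)) by ring.
  rewrite <- Rpower_sq, <- Rpow_mult_distr.
  apply pow_incr. split; [apply rho_nonneg; [exact Hh | lia] | exact Hup].
Qed.

Lemma ex_series_rho_sq (h : R) : 1/2 <= h < 3/4 -> ex_series (fun n => rho h (S n) ^ 2).
Proof.
  intros Hh. apply ex_series_incr_1.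
  apply (ex_series_le (K := R_AbsRing) (V := R_CompleteNormedModule))
    with (fun n => (h * (2 * h - 1)) ^ 2 * zeta_term (4 - 4 * h) n).
  - intros n. change (norm (rho h (S (S n)) ^ 2)) with (Rabs (rho h (S (S n)) ^ 2)).
    rewrite Rabs_pos_eq by apply pow2_ge_0.
    apply rho_sq_upper_bound. lra.
  - apply (ex_series_scal_l ((h * (2 * h - 1)) ^ 2) (zeta_term (4 - 4 * h))).
    apply ex_series_zeta_term. lra.
Qed.

Lemma Series_rho_sq_lower_bound (h : R) : 1/2 <= h < 3/4 ->
  h ^ 2 * (2 * h - 1) ^ 2 / 4 * zeta (4 - 4 * h) <= Series (fun n => rho h (S n) ^ 2).
Proof.
  intros Hh. unfold zeta. fold (zeta_term (4 - 4 * h)). rewrite <- Series_scal_l.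
  apply Series_le; [|now apply ex_series_rho_sq].
  intros n. split.
  - pose proof (zeta_term_pos (4 - 4 * h) n).
    apply Rmult_le_pos; [|lra]. apply Rmult_le_pos; [|lra].
    apply Rmult_le_pos; apply pow2_ge_0.
  - apply rho_sq_lower_bound. lra.
Qed.

Lemma filterlim_inv_dist_at_left (a c : R) : 0 < c ->
  filterlim (fun h => / (c * (a - h))) (at_left a) (Rbar_locally p_infty).
Proof.
  intros Hc.
  apply (filterlim_comp _ _ _ (fun h => c * (a - h)) Rinv _ (at_right 0));
    [|exact filterlim_Rinv_0_right].
  intros P [eps HP]. unfold filtermap.
  exists (mkposreal (eps / c) (Rdiv_lt_0_compat _ _ (cond_pos eps) Hc)).
  intros y Hy Hya. apply HP; [|nra].
  unfold ball in *; simpl in *; unfold AbsRing_ball, abs, minus, plus, opp in *; simpl in *.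
  rewrite Ropp_0, Rplus_0_r, Rabs_mult, Rabs_pos_eq by lra.
  rewrite <- Rabs_Ropp, Ropp_plus_distr, Ropp_involutive, Rplus_comm in Hy.
  apply Rmult_lt_compat_l with (r := c) in Hy; [|exact Hc].
  replace (c * (eps / c)) with (pos eps) in Hy by (field; lra).
  exact Hy.
Qed.

Lemma Series_rho_sq_at_left : filterlim (fun h => Series (fun n => rho h (S n) ^ 2))
  (at_left (3/4)) (Rbar_locally p_infty).
Proof.
  apply filterlim_ge_p_infty with (f := fun h => / (648 * (3/4 - h)));
    [|apply filterlim_inv_dist_at_left; lra].
  (* On [2/3 < h < 3/4] the constant [h^2 (2h-1)^2 / 4] is at least [1/81]. *)
  exists (mkposreal (1/12) ltac:(lra)). intros h Hball Hlt.
  unfold ball in Hball; simpl in Hball; unfold AbsRing_ball, abs, minus, plus, opp in Hball;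
    simpl in Hball. apply Rabs_def2 in Hball.
  assert (Hh : 2/3 < h < 3/4) by lra.
  assert (Hz := zeta_lower_bound (4 - 4 * h) ltac:(lra)).
  assert (Hzpos : 0 < / (2 * (4 - 4 * h - 1))) by (apply Rinv_0_lt_compat; lra).
  assert (Hc : 1/81 <= h ^ 2 * (2 * h - 1) ^ 2 / 4).
  { assert (4/9 <= h ^ 2) by nra. assert (1/9 <= (2 * h - 1) ^ 2) by nra. nra. }
  replace (/ (648 * (3/4 - h))) with (1/81 * / (2 * (4 - 4 * h - 1))) by (field; lra).
  eapply Rle_trans; [|apply Series_rho_sq_lower_bound; lra].
  apply Rmult_le_compat; lra.
Qed.

Theorem lemmaA4 :
  (forall h : R, 1/2 < h < 3/4 ->
     forall k : nat, (1 <= k)%nat ->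
       rho h k >= h * (2 * h - 1) / (2 * rpow (INR k) (2 - 2 * h)))
  /\
  (forall h : R, 1/2 < h < 3/4 ->
     ex_series (fun n : nat => (rho h (S n)) ^ 2) /\
     Series (fun n : nat => (rho h (S n)) ^ 2)
       >= h ^ 2 * (2 * h - 1) ^ 2 / 4 * zeta (4 - 4 * h))
  /\
  filterlim (fun h : R => Series (fun n : nat => (rho h (S n)) ^ 2))
            (at_left (3/4)) (Rbar_locally p_infty).
Proof.
  split; [|split].
  - intros h Hh k Hk. apply Rle_ge.
    assert (HK : 1 <= INR k) by (apply (le_INR 1); exact Hk).
    rewrite rpow_Rpower by lra.
    replace (h * (2 * h - 1) / (2 * Rpower (INR k) (2 - 2 * h)))
      with (h * (2 * h - 1) / 2 * Rpower (INR k) (2 * h - 2))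
      by (replace (2 * h - 2) with (- (2 - 2 * h)) by ring;
          rewrite Rpower_Ropp; field; apply Rgt_not_eq, Rpower_pos).
    apply rho_lower_bound; [lra | exact Hk].
  - intros h Hh. split.
    + apply ex_series_rho_sq. lra.
    + apply Rle_ge, Series_rho_sq_lower_bound. lra.
  - exact Series_rho_sq_at_left.
Qed.
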